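(* Let $M$ be a known finite-horizon reward-free MDP, $\Pi\subseteq\Pi_{\mathrm{RNS}}$, $\varepsilon\in[0,1]$, $h\in[H]$, and $\mu\in\Delta(\mathcal{X}\times\mathcal{A})$ with $C_\infty\equiv C^M_{\infty;h}(\mu)$. Consider the following procedure: set $T=\varepsilon^{-1}$; for $t=1,\dots,T$, compute $\pi^{(t)}\in\Pi$ such that $$\mathbb{E}^{M,\pi^{(t)}}\Big[\frac{\mu(x_h,a_h)}{\sum_{i<t}d^{M,\pi^{(i)}}_h(x_h,a_h)+C_\infty\mu(x_h,a_h)}\Big]\ge\sup_{\pi\in\Pi}\mathbb{E}^{M,\pi}\Big[\frac{\mu(x_h,a_h)}{\sum_{i<t}d^{M,\pi^{(i)}}_h(x_h,a_h)+C_\infty\mu(x_h,a_h)}\Big]-\varepsilon_{\mathrm{opt}};$$ return $p=\mathrm{Unif}(\pi^{(1)},\dots,\pi^{(T)})$. Whenever $\varepsilon_{\mathrm{opt}}\le\varepsilon\log(2\varepsilon^{-1})$, the output $p\in\Delta(\Pi)$ satisfies $|\mathrm{supp}(p)|\le\varepsilon^{-1}$ and $$\Psi^M_{\mu;h,\varepsilon}(p)\le 3\log(2\varepsilon^{-1}),$$ and consequently $\Psi^M_{h,\varepsilon}(p)\le 6C_\infty\log(2\varepsilon^{-1})$.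
   Context: Episodic reward-free MDP $M$ (countable states $\mathcal{X}$, actions $\mathcal{A}$, horizon $H$); $\Pi_{\mathrm{RNS}}$ randomized non-stationary policies; $d^{M,\pi}_h(x,a)$ is the layer-$h$ state-action occupancy of $\pi$ in $M$, $d^{M,p}_h=\mathbb{E}_{\pi\sim p}d^{M,\pi}_h$. Definitions: $\Psi^M_{h,\varepsilon}(p)=\sup_{\pi\in\Pi}\mathbb{E}^{M,\pi}\big[\frac{d^{M,\pi}_h(x_h,a_h)}{d^{M,p}_h(x_h,a_h)+\varepsilon d^{M,\pi}_h(x_h,a_h)}\big]$; $C^M_{\infty;h}(\mu)=\sup_{\pi\in\Pi}\sup_{(x,a)}\frac{d^{M,\pi}_h(x,a)}{\mu(x,a)}$; $\Psi^M_{\mu;h,\varepsilon}(p)=\sup_{\pi\in\Pi}\mathbb{E}^{M,\pi}\big[\frac{\mu(x_h,a_h)}{d^{M,p}_h(x_h,a_h)+\varepsilon C_\infty\mu(x_h,a_h)}\big]$. *)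

From HB Require Import structures.
From mathcomp Require Import all_boot all_order all_algebra.
From mathcomp Require Import all_classical all_reals all_analysis.
Set Implicit Arguments. Unset Strict Implicit. Unset Printing Implicit Defensive.
Import Order.TTheory GRing.Theory Num.Theory.
Local Open Scope classical_set_scope.
Local Open Scope ring_scope.
Local Open Scope ereal_scope.

(* Episodic reward-free MDP over countable state space X and action space A.
   Layers are numbered 1, 2, ..., H. *)
Record mdp (R : realType) (X A : countType) := MDP {
  horizon : nat;
  init : X -> R;
  trans : nat -> X -> A -> X -> R   (* trans h x a x' = P_h(x' | x, a) *)
}.

Definition is_distr (R : realType) (T : countType) (f : T -> R) : Prop :=
  (forall t, (0 <= f t)%R) /\ \esum_(t in [set: T]) (f t)%:E = 1.

Definition is_mdp (R : realType) (X A : countType) (M : mdp R X A) : Prop :=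
  is_distr (init M) /\ forall h x a, is_distr (trans M h x a).

(* randomized non-stationary (Markov) policy: pi h x is a distribution on A *)
Definition policy (R : realType) (X A : countType) := nat -> X -> A -> R.

Definition Pi_RNS (R : realType) (X A : countType) : set (policy R X A) :=
  [set pi | forall h x, is_distr (pi h x)].

(* occupancy at layer n.+1, in extended reals *)
Fixpoint occ_e (R : realType) (X A : countType) (M : mdp R X A)
    (pi : policy R X A) (n : nat) : X -> A -> \bar R :=
  match n with
  | 0 => fun x a => (init M x * pi 1%N x a)%:E
  | n'.+1 => fun x' a' =>
      (\esum_(z in [set: X * A]) occ_e M pi n' z.1 z.2
                                  * (trans M n z.1 z.2 x')%:E)
      * (pi n.+1 x' a')%:E
  end.

(* d^{M,pi}_h (x,a), layer h >= 1 *)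
Definition occ (R : realType) (X A : countType) (M : mdp R X A)
    (pi : policy R X A) (h : nat) (x : X) (a : A) : R :=
  fine (occ_e M pi h.-1 x a).

Definition eratio (R : realType) (b c : R) : \bar R :=
  if c == 0%R then (if b == 0%R then 0 else +oo) else (b / c)%:E.

Definition Eocc (R : realType) (X A : countType) (M : mdp R X A)
    (pi : policy R X A) (h : nat) (g : X -> A -> \bar R) : \bar R :=
  \esum_(z in [set: X * A]) (occ M pi h z.1 z.2)%:E * g z.1 z.2.

(* A finitely supported distribution p on policies is represented through
   its layer-h occupancy d^{M,p}_h = E_{pi ~ p} d^{M,pi}_h : X -> A -> R. *)

Definition Psi (R : realType) (X A : countType) (M : mdp R X A)
    (Pi : set (policy R X A)) (h : nat) (eps : R) (dp : X -> A -> R) : \bar R :=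
  ereal_sup [set Eocc M pi h (fun x a =>
                eratio (occ M pi h x a) (dp x a + eps * occ M pi h x a))
            | pi in Pi].

Definition Cinf (R : realType) (X A : countType) (M : mdp R X A)
    (Pi : set (policy R X A)) (h : nat) (mu : X * A -> R) : \bar R :=
  ereal_sup [set eratio (occ M pi h z.1 z.2) (mu z)
            | pi in Pi & z in [set: X * A]].

(* Psi^M_{mu;h,eps}(p), with C_infty = C^M_{infty;h}(mu) (assumed finite) *)
Definition Psi_mu (R : realType) (X A : countType) (M : mdp R X A)
    (Pi : set (policy R X A)) (h : nat) (eps : R) (mu : X * A -> R)
    (dp : X -> A -> R) : \bar R :=
  let C := fine (Cinf M Pi h mu) in
  ereal_sup [set Eocc M pi h (fun x a =>
                eratio (mu (x, a)) (dp x a + eps * C * mu (x, a)))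
            | pi in Pi].

(* The output p = Unif(pol 0, ..., pol (T-1)) *)
Definition unif_pmf (R : realType) (X A : countType) (T : nat)
    (pol : nat -> policy R X A) (pi : policy R X A) : R :=
  ((\sum_(t < T) (if `[< pol t = pi >] then 1 else 0)) / T%:R)%R.

Definition supp (R : realType) (X A : countType) (p : policy R X A -> R)
  : set (policy R X A) := [set pi | p pi != 0%R].

Definition unif_occ (R : realType) (X A : countType) (M : mdp R X A)
    (T : nat) (pol : nat -> policy R X A) (h : nat) (x : X) (a : A) : R :=
  ((\sum_(t < T) occ M (pol t) h x a) / T%:R)%R.

(* With eps = 1/T the mixture objective splits over the rounds:
   mu / (d^p + eps C mu) = T mu / (sum_t d^(pi_t) + C mu)
                        <= sum_t mu / (sum_(i<t) d^(pi_i) + C mu),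
   because every prefix sum is at most the full sum.  Approximate optimality of
   pi_t in round t replaces an arbitrary pi by pi_t at a cost eps_opt per round,
   and sum_t d^(pi_t) / (sum_(i<t) d^(pi_i) + C mu) is an elliptic-potential sum
   with increments d^(pi_t) <= C mu, which telescopes through x <= 2 ln (1 + x)
   to at most 2 ln (T + 1).  Integrating against mu gives
   Psi_mu <= 2 ln (T + 1) + T eps_opt <= 3 ln (2 / eps).  Finally d^pi <= C mu
   and the monotonicity of x |-> x / (d + eps x) give Psi <= C Psi_mu. *)

From HB Require Import structures.
From mathcomp Require Import all_boot all_order all_algebra.
From mathcomp Require Import all_classical all_reals all_analysis.
From mathcomp Require Import ring lra.
Import Order.TTheory GRing.Theory Num.Theory.
Local Open Scope classical_set_scope.
Local Open Scope ring_scope.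

Section potential_inequalities.
Context {R : realType}.
Implicit Types (b c e x y : R) (d : nat -> R).

Lemma ln1Dx_ge_half x : 0 <= x <= 1 -> x <= 2 * ln (1 + x).
Proof.
case/andP=> x_ge0 x_le1; have x1_gt0 : 0 < 1 + x by lra.
(* ln (1 + x) >= x / (1 + x) >= x / 2, from ln (1 + u) <= u at u = - x / (1 + x) *)
have : ln (1 + - (x / (1 + x))) <= - (x / (1 + x)).
  by apply: le_ln1Dx; rewrite ltrN2 ltr_pdivrMr // mul1r; lra.
have -> : 1 + - (x / (1 + x)) = (1 + x)^-1 by field; rewrite gt_eqF.
rewrite lnV ?posrE // lerN2 => /(ler_wpM2l (ler0n _ 2)); apply: le_trans.
by rewrite mulrA ler_pdivlMr // mulrDr mulr1; nra.
Qed.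

Lemma sum_prefix_ratio_le_ln c d T : 0 < c ->
  (forall t, (t < T)%N -> 0 <= d t <= c) ->
  \sum_(t < T) d t / (\sum_(i < t) d i + c)
    <= 2 * (ln (\sum_(t < T) d t + c) - ln c).
Proof.
move=> c_gt0; elim: T => [|T IH] d_bnd; first by rewrite !big_ord0 add0r subrr mulr0.
rewrite !big_ord_recr /=; set S := \sum_(i < T) d i.
have S_ge0 : 0 <= S by apply: sumr_ge0 => i _; case/andP: (d_bnd i (ltnW (ltn_ord i))).
have /andP[dT_ge0 dT_le] := d_bnd T (ltnSn T).
have Sc_gt0 : 0 < S + c by lra.
have step : d T / (S + c) <= 2 * (ln (S + d T + c) - ln (S + c)).
  have -> : S + d T + c = (S + c) * (1 + d T / (S + c)) by field; rewrite gt_eqF.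
  rewrite lnM ?posrE; last 2 first.
  - exact: Sc_gt0.
  - by rewrite ltr_pwDl // divr_ge0 //; lra.
  rewrite addrAC subrr add0r.
  apply: ln1Dx_ge_half; rewrite divr_ge0 ?(ltW Sc_gt0) //=.
  by rewrite ler_pdivrMr // mul1r; lra.
have := IH (fun t tT => d_bnd t (ltnW tT)); rewrite -/S; lra.
Qed.

Lemma sum_prefix_ratio_le_lnS c d T : 0 < c ->
  (forall t, (t < T)%N -> 0 <= d t <= c) ->
  \sum_(t < T) d t / (\sum_(i < t) d i + c) <= 2 * ln T.+1%:R.
Proof.
move=> c_gt0 d_bnd; apply: le_trans (sum_prefix_ratio_le_ln _ _ _ c_gt0 d_bnd) _.
rewrite ler_wpM2l // lerBlDl -lnM ?posrE ?ltr0Sn //.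
have S_le : \sum_(t < T) d t <= T%:R * c.
  rewrite -[T in T%:R]card_ord mulr_natl -sumr_const; apply: ler_sum => t _.
  by case/andP: (d_bnd t (ltn_ord t)).
have S_ge0 : 0 <= \sum_(t < T) d t.
  by apply: sumr_ge0 => t _; case/andP: (d_bnd t (ltn_ord t)).
rewrite ler_ln ?posrE ?mulr_gt0 ?ltr0Sn //; last lra.
rewrite mulrSr; lra.
Qed.

Lemma sum_inv_prefix_ge c d T : 0 < c -> (forall t, (t < T)%N -> 0 <= d t) ->
  T%:R / (\sum_(t < T) d t + c) <= \sum_(t < T) (\sum_(i < t) d i + c)^-1.
Proof.
move=> c_gt0 d_ge0; rewrite -[T in T%:R]card_ord mulr_natl -sumr_const.
apply: ler_sum => t _.
have sum_ge0 n : (n <= T)%N -> 0 <= \sum_(i < n) d i.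
  by move=> nT; apply: sumr_ge0 => i _; apply: d_ge0; apply: leq_trans nT.
have c_le n : (n <= T)%N -> 0 < \sum_(i < n) d i + c.
  by move=> nT; rewrite ltr_wpDl ?sum_ge0.
rewrite lef_pV2 ?posrE ?c_le ?leqnn ?(ltnW (ltn_ord t)) // lerD2r.
rewrite (big_ord_widen T d (ltnW (ltn_ord t))).
rewrite [leRHS](bigID (fun i : 'I_T => (i < t)%N)) /= lerDl.
by apply: sumr_ge0 => i _; apply: d_ge0.
Qed.

Lemma ler_linfrac b e x y : 0 <= b -> 0 < e -> 0 < x <= y ->
  x / (b + e * x) <= y / (b + e * y).
Proof.
move=> b_ge0 e_gt0 /andP[x_gt0 x_le_y].
have ex_gt0 : 0 < e * x by apply: mulr_gt0.
have ey_gt0 : 0 < e * y by apply: mulr_gt0; lra.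
rewrite ler_pdivrMr; last lra.
rewrite mulrAC ler_pdivlMr; last lra.
by rewrite !mulrDr !(mulrCA _ e) (mulrC y x) lerD2r ler_wpM2r.
Qed.

End potential_inequalities.

Lemma ln_budget {R : realType} {eps eps_opt : R} {T : nat} : (0 < T)%N ->
  eps^-1 = T%:R -> eps_opt <= eps * ln (2 / eps) ->
  0 <= ln (2 / eps) /\ 2 * ln T.+1%:R + T%:R * eps_opt <= 3 * ln (2 / eps).
Proof.
move=> T_gt0 epsT eps_opt_le; have T_ge1 : 1 <= T%:R :> R by rewrite ler1n.
have eps_gt0 : 0 < eps by rewrite -invr_gt0 epsT ltr0n.
have L_def : 2 / eps = 2 * T%:R by rewrite epsT.
have lnS_le : ln T.+1%:R <= ln (2 / eps).
  by rewrite L_def ler_ln ?posrE -?natr1; lra.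
have opt_le : T%:R * eps_opt <= ln (2 / eps).
  apply: le_trans (ler_wpM2l (ler0n _ T) eps_opt_le) _.
  by rewrite mulrA -epsT mulVf ?mul1r // gt_eqF.
by split; [rewrite ln_ge0 // L_def | ]; lra.
Qed.

Lemma esumZ_le [R : realType] [T : choiceType] [I : set T] [k : R]
    [a : T -> \bar R] : 0 <= k -> (forall i, I i -> (0 <= a i)%E) ->
  (\esum_(i in I) (k%:E * a i) <= k%:E * \esum_(i in I) a i)%E.
Proof.
move=> k_ge0 a_ge0; apply: ge_ereal_sup => _ [F [finF FI] <-].
rewrite fsbig_finite //= big_seq -ge0_sume_distrr; last first.
  by move=> i; rewrite in_fset_set // inE => /FI/a_ge0.
rewrite -big_seq; apply: lee_wpmul2l; first by rewrite lee_fin.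
by apply: esum_ge; exists F => //; rewrite fsbig_finite.
Qed.

Lemma distr_exists_gt0 {R : realType} {T : countType} {f : T -> R} :
  is_distr f -> exists t, 0 < f t.
Proof.
case=> f_ge0 f_sum1; apply/not_existsP => f_le0; move: f_sum1.
rewrite esum1 => [/eqP|t _]; first by rewrite eq_sym onee_eq0.
by apply/eqP; rewrite eqe eq_le f_ge0 andbT leNgt; apply/negP/f_le0.
Qed.

Section eratio.
Context {R : realType}.
Implicit Types b c : R.

Lemma eratio0 c : eratio 0 c = 0%E.
Proof. by rewrite /eratio; case: ifP; rewrite ?eqxx // mul0r. Qed.

Lemma eratio_div b c : 0 < c -> eratio b c = (b / c)%:E.
Proof. by move=> c_gt0; rewrite /eratio gt_eqF. Qed.

Lemma eratio_ge0 {b c} : 0 <= b -> 0 <= c -> (0 <= eratio b c)%E.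
Proof.
move=> b_ge0 c_ge0; rewrite /eratio.
by case: ifP => _; [case: ifP | rewrite lee_fin divr_ge0].
Qed.

End eratio.

Lemma supp_unif_pmf {R : realType} {X A : countType} (T : nat)
    (pol : nat -> policy R X A) :
  supp (unif_pmf T pol) `<=` pol @` `I_T.
Proof.
move=> pi; rewrite /supp /unif_pmf /=.
case: (pickP (fun t : 'I_T => `[< pol t = pi >])) => [t /asboolP <- _|none].
  by exists (nat_of_ord t) => //=.
by rewrite big1 ?mul0r ?eqxx // => t _; rewrite none.
Qed.

Section occupancy.
Context {R : realType} {X A : countType} {M : mdp R X A}.
Implicit Types (pi : policy R X A) (h : nat) (f g : X -> A -> \bar R).

Lemma Eocc_occ0 pi h g : (forall x a, occ M pi h x a = 0) -> Eocc M pi h g = 0%E.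
Proof. by move=> occ0; rewrite /Eocc esum1 // => z _; rewrite occ0 mul0e. Qed.

Lemma occ_le_Cinf (Pi : set (policy R X A)) h mu pi x a :
  Cinf M Pi h mu \is a fin_num -> 0 <= mu (x, a) -> Pi pi ->
  occ M pi h x a <= fine (Cinf M Pi h mu) * mu (x, a).
Proof.
move=> Cfin mu_ge0 pi_in.
have : (eratio (occ M pi h x a) (mu (x, a)) <= Cinf M Pi h mu)%E.
  by apply: ereal_sup_ubound; exists pi => //; exists (x, a).
rewrite -(fineK Cfin) /eratio; case: ifPn => [/eqP -> | mu_neq0].
  by case: ifPn => [/eqP -> _ | _]; rewrite ?mulr0 // leye_eq.
have mu_gt0 : 0 < mu (x, a) by rewrite lt0r mu_neq0.
by rewrite lee_fin ler_pdivrMr // mulrC.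
Qed.

Hypothesis M_mdp : is_mdp M.

Lemma occ_e_ge0 pi n x a : Pi_RNS pi -> (0 <= occ_e M pi n x a)%E.
Proof.
case: M_mdp => [[init_ge0 _] trans_distr] pi_RNS.
elim: n x a => [|n IH] x a /=.
  by rewrite lee_fin mulr_ge0 //; case: (pi_RNS 1%N x).
apply: mule_ge0; last by rewrite lee_fin; case: (pi_RNS n.+2 x).
apply: esum_ge0 => z _; apply: mule_ge0 => //.
by rewrite lee_fin; case: (trans_distr n.+1 z.1 z.2).
Qed.

Lemma occ_ge0 pi h x a : Pi_RNS pi -> 0 <= occ M pi h x a.
Proof. by move=> pi_RNS; rewrite /occ fine_ge0 // occ_e_ge0. Qed.

Lemma Cinf_ge0 (Pi : set (policy R X A)) h mu pi :
  is_distr mu -> Pi_RNS pi -> Pi pi -> (0 <= Cinf M Pi h mu)%E.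
Proof.
move=> mu_distr pi_RNS pi_in; have [z _] := distr_exists_gt0 mu_distr.
apply: le_trans (eratio_ge0 (occ_ge0 _ h z.1 z.2 pi_RNS) (mu_distr.1 z)) _.
by apply: ereal_sup_ubound; exists pi => //; exists z.
Qed.

Lemma le_Eocc pi h f g : Pi_RNS pi -> (forall x a, (f x a <= g x a)%E) ->
  (Eocc M pi h f <= Eocc M pi h g)%E.
Proof.
move=> pi_RNS fg; apply: le_esum => z _.
by apply: lee_wpmul2l; rewrite ?lee_fin ?occ_ge0.
Qed.

Lemma Eocc_sum pi h n (g : 'I_n -> X -> A -> \bar R) : Pi_RNS pi ->
  (forall t x a, (0 <= g t x a)%E) ->
  Eocc M pi h (fun x a => \sum_(t < n) g t x a) = \sum_(t < n) Eocc M pi h (g t).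
Proof.
move=> pi_RNS g_ge0; rewrite /Eocc -esum_sum; last first.
  by move=> z t _ _; rewrite mule_ge0 ?lee_fin ?occ_ge0.
by apply: eq_esum => z _; rewrite ge0_sume_distrr.
Qed.

Lemma le_EoccZ pi h (k : R) f g : Pi_RNS pi -> 0 <= k ->
  (forall x a, (0 <= g x a)%E) -> (forall x a, (f x a <= k%:E * g x a)%E) ->
  (Eocc M pi h f <= k%:E * Eocc M pi h g)%E.
Proof.
move=> pi_RNS k_ge0 g_ge0 fg.
apply: (@le_trans _ _ (Eocc M pi h (fun x a => k%:E * g x a)%E)); first exact: le_Eocc.
rewrite /Eocc.
under eq_esum do rewrite muleCA.
by apply: esumZ_le => // z _; rewrite mule_ge0 ?lee_fin ?occ_ge0.
Qed.

End occupancy.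

Definition round_objective {R : realType} {X A : countType} (M : mdp R X A)
    (h : nat) (mu : X * A -> R) (C : R) (pol : nat -> policy R X A)
    (t : nat) (x : X) (a : A) : \bar R :=
  eratio (mu (x, a)) (\sum_(i < t) occ M (pol i) h x a + C * mu (x, a)).

Section iterated_cover.
Context {R : realType} {X A : countType} {M : mdp R X A} {Pi : set (policy R X A)}.
Context {h : nat} {mu : X * A -> R} {C : R}.
Hypotheses (M_mdp : is_mdp M) (Pi_RNS_sub : Pi `<=` @Pi_RNS R X A).
Hypotheses (mu_ge0 : forall z, 0 <= mu z) (C_gt0 : 0 < C).
Hypothesis occ_le_C : forall pi, Pi pi -> forall x a, occ M pi h x a <= C * mu (x, a).

Lemma Eocc_occ_ratio_le (b : X -> A -> R) (e : R) pi : Pi pi -> 0 < e ->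
  (forall x a, 0 <= b x a) ->
  (Eocc M pi h (fun x a => eratio (occ M pi h x a) (b x a + e * occ M pi h x a))
   <= C%:E * Eocc M pi h (fun x a => eratio (mu (x, a)) (b x a + e * C * mu (x, a))))%E.
Proof.
move=> pi_in e_gt0 b_ge0; have pi_RNS := Pi_RNS_sub _ pi_in.
have denom_ge0 x a : 0 <= b x a + e * C * mu (x, a).
  by rewrite addr_ge0 // !mulr_ge0 // ltW.
apply: le_EoccZ => // [|x a|x a]; [exact: ltW | exact: eratio_ge0 |].
have [occ_eq0 | occ_neq0] := eqVneq (occ M pi h x a) 0.
  by rewrite occ_eq0 eratio0 mule_ge0 ?lee_fin ?eratio_ge0 // ltW.
have occ_gt0 : 0 < occ M pi h x a by rewrite lt0r occ_neq0 occ_ge0.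
have Cmu_gt0 : 0 < C * mu (x, a) by apply: lt_le_trans (occ_le_C _ pi_in x a).
have mu_gt0 : 0 < mu (x, a) by rewrite -(pmulr_rgt0 _ C_gt0).
rewrite !eratio_div -?EFinM ?lee_fin; last 2 first.
- by rewrite ltr_wpDl // !mulr_gt0.
- by rewrite ltr_wpDl // mulr_gt0.
rewrite mulrA -(mulrA e); apply: ler_linfrac => //.
by rewrite occ_gt0 occ_le_C.
Qed.

Context {T : nat} {pol : nat -> policy R X A}.
Hypotheses (T_gt0 : (0 < T)%N) (pol_in : forall t, (t < T)%N -> Pi (pol t)).

Local Notation objective := (round_objective M h mu C pol).

Lemma prefix_occ_ge0 t x a : (t <= T)%N -> 0 <= \sum_(i < t) occ M (pol i) h x a.
Proof.
move=> tT; apply: sumr_ge0 => i _; apply: occ_ge0 => //.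
by apply/Pi_RNS_sub/pol_in; apply: leq_trans (ltn_ord i) tT.
Qed.

Lemma round_objective_ge0 t x a : (t <= T)%N -> (0 <= objective t x a)%E.
Proof.
move=> tT; apply: eratio_ge0 => //.
by rewrite addr_ge0 ?prefix_occ_ge0 // mulr_ge0 // ltW.
Qed.

Lemma Eocc_unif_le_sum_objective pi : Pi pi ->
  (Eocc M pi h (fun x a => eratio (mu (x, a))
       (unif_occ M T pol h x a + T%:R^-1 * C * mu (x, a)))
   <= \sum_(t < T) Eocc M pi h (objective t))%E.
Proof.
move=> pi_in; have pi_RNS := Pi_RNS_sub _ pi_in.
rewrite -Eocc_sum //; last by move=> t x a; rewrite round_objective_ge0 // ltnW.
apply: le_Eocc => // x a.
have [mu_eq0 | mu_neq0] := eqVneq (mu (x, a)) 0.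
  rewrite mu_eq0 eratio0 sume_ge0 // => t _.
  by rewrite round_objective_ge0 // ltnW.
have Cmu_gt0 : 0 < C * mu (x, a) by rewrite mulr_gt0 // lt0r mu_neq0 mu_ge0.
set S := fun t : nat => \sum_(i < t) occ M (pol i) h x a.
have T_pos : 0 < T%:R :> R by rewrite ltr0n.
have -> : unif_occ M T pol h x a + T%:R^-1 * C * mu (x, a) = (S T + C * mu (x, a)) / T%:R.
  by rewrite /unif_occ /S; ring.
rewrite eratio_div; last by rewrite divr_gt0 // ltr_wpDl ?prefix_occ_ge0.
rewrite (eq_bigr (fun t : 'I_T => (mu (x, a) * (S t + C * mu (x, a))^-1)%:E)); last first.
  by move=> t _; rewrite /round_objective eratio_div // ltr_wpDl ?prefix_occ_ge0 // ltnW.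
rewrite sumEFin lee_fin -mulr_sumr invf_div ler_wpM2l //.
apply: (sum_inv_prefix_ge _ (fun i => occ M (pol i) h x a)) => // t tT.
by apply: occ_ge0 => //; apply/Pi_RNS_sub/pol_in.
Qed.

Hypothesis mu_sum1 : (\esum_(z in [set: X * A]) (mu z)%:E = 1)%E.

Lemma sum_Eocc_objective_le :
  (\sum_(t < T) Eocc M (pol t) h (objective t) <= (2 * ln T.+1%:R)%:E)%E.
Proof.
have occ_pol_ge0 t x a : (t < T)%N -> 0 <= occ M (pol t) h x a.
  by move=> tT; apply: occ_ge0 => //; apply/Pi_RNS_sub/pol_in.
rewrite /Eocc -esum_sum; last first.
  by move=> z t _ _; rewrite mule_ge0 ?lee_fin ?occ_pol_ge0 ?round_objective_ge0 // ltnW.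
apply: (@le_trans _ _ (\esum_(z in [set: X * A]) ((2 * ln T.+1%:R)%:E * (mu z)%:E))%E).
  apply: le_esum => -[x a] _ /=.
  have [mu_eq0 | mu_neq0] := eqVneq (mu (x, a)) 0.
    rewrite mu_eq0 mule0 big1 // => t _.
    by rewrite /round_objective mu_eq0 eratio0 mule0.
  have Cmu_gt0 : 0 < C * mu (x, a) by rewrite mulr_gt0 // lt0r mu_neq0 mu_ge0.
  rewrite (eq_bigr (fun t : 'I_T => (mu (x, a) * (occ M (pol t) h x a /
      (\sum_(i < t) occ M (pol i) h x a + C * mu (x, a))))%:E)); last first.
    move=> t _; rewrite /round_objective eratio_div -?EFinM ?(mulrCA (mu _)) //.
    by rewrite ltr_wpDl ?prefix_occ_ge0 // ltnW.
  rewrite sumEFin -EFinM lee_fin -mulr_sumr [leRHS]mulrC ler_wpM2l //.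
  apply: (sum_prefix_ratio_le_lnS _ (fun t => occ M (pol t) h x a)) => // t tT.
  by rewrite occ_pol_ge0 //= occ_le_C //; apply: pol_in.
apply: le_trans (esumZ_le _ _) _.
- by rewrite mulr_ge0 // ln_ge0 // ler1n.
- by move=> z _; rewrite lee_fin.
- by rewrite mu_sum1 mule1.
Qed.

Context {eps_opt : R}.
Hypothesis pol_opt : forall t, (t < T)%N ->
  (ereal_sup [set Eocc M pi h (objective t) | pi in Pi] - eps_opt%:E
   <= Eocc M (pol t) h (objective t))%E.

Lemma Psi_mu_unif_le :
  (ereal_sup [set Eocc M pi h (fun x a => eratio (mu (x, a))
                    (unif_occ M T pol h x a + T%:R^-1 * C * mu (x, a))) | pi in Pi]
   <= (2 * ln T.+1%:R + T%:R * eps_opt)%:E)%E.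
Proof.
apply: ge_ereal_sup => _ [pi pi_in <-].
apply: le_trans (Eocc_unif_le_sum_objective _ pi_in) _.
apply: (@le_trans _ _ (\sum_(t < T) (Eocc M (pol t) h (objective t) + eps_opt%:E))%E).
  apply: lee_sum => t _; rewrite -leeBlDr //; apply: le_trans _ (pol_opt t (ltn_ord t)).
  by apply: leeD2r; apply: ereal_sup_ubound; exists pi.
rewrite big_split /= sumEFin sumr_const card_ord -[eps_opt *+ T]mulr_natl EFinD.
exact: leeD sum_Eocc_objective_le (lexx _).
Qed.

Lemma Psi_unif_le : (Psi M Pi h T%:R^-1 (unif_occ M T pol h)
   <= (C * (2 * ln T.+1%:R + T%:R * eps_opt))%:E)%E.
Proof.
apply: ge_ereal_sup => _ [pi pi_in <-].
have unif_occ_ge0 x a : 0 <= unif_occ M T pol h x a.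
  by rewrite divr_ge0 // prefix_occ_ge0.
apply: le_trans (Eocc_occ_ratio_le _ _ _ pi_in _ unif_occ_ge0) _.
  by rewrite invr_gt0 ltr0n.
rewrite EFinM; apply: lee_wpmul2l; first by rewrite lee_fin ltW.
by apply: le_trans Psi_mu_unif_le; apply: ereal_sup_ubound; exists pi.
Qed.

End iterated_cover.

Theorem theorem4p2 (R : realType) (X A : countType) (M : mdp R X A)
    (Pi : set (policy R X A)) (eps : R) (T : nat) (h : nat)
    (mu : X * A -> R) (eps_opt : R) (pol : nat -> policy R X A) :
  is_mdp M ->
  Pi `<=` @Pi_RNS R X A ->
  (0 < T)%N -> eps^-1 = T%:R ->
  (1 <= h <= horizon M)%N ->
  is_distr mu ->
  Cinf M Pi h mu \is a fin_num ->
  let C := fine (Cinf M Pi h mu) in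
  (forall t, (t < T)%N -> Pi (pol t)) ->
  (forall t, (t < T)%N ->
     let g := fun x a => eratio (mu (x, a))
                (\sum_(i < t) occ M (pol i) h x a + C * mu (x, a)) in
     (Eocc M (pol t) h g >= ereal_sup [set Eocc M pi h g | pi in Pi]
                              - eps_opt%:E)%E) ->
  eps_opt <= eps * ln (2 / eps) ->
  let p := unif_pmf T pol in
  let dp := unif_occ M T pol h in
  supp p `<=` Pi /\
  (supp p #<= `I_T)%card /\
  (Psi_mu M Pi h eps mu dp <= (3 * ln (2 / eps))%:E)%E /\
  (Psi M Pi h eps dp <= (6 * C * ln (2 / eps))%:E)%E.
Proof.
move=> M_mdp Pi_sub T_gt0 epsT _ mu_distr Cfin C pol_in pol_opt eps_opt_le p dp.
have supp_sub : supp p `<=` pol @` `I_T := supp_unif_pmf T pol.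
split; first by move=> _ /supp_sub [t tT <-]; apply: pol_in.
split; first exact: card_le_trans (subset_card_le supp_sub) (card_image_le _ _).
have [L_ge0 budget] := ln_budget T_gt0 epsT eps_opt_le.
have pol0_in := pol_in 0%N T_gt0.
have C_ge0 : 0 <= C.
  by rewrite fine_ge0 // (Cinf_ge0 M_mdp Pi h mu _ mu_distr (Pi_sub _ pol0_in) pol0_in).
have [mu_ge0 mu_sum1] := mu_distr.
have occ_le_C pi : Pi pi -> forall x a, occ M pi h x a <= C * mu (x, a).
  by move=> pi_in x a; apply: occ_le_Cinf.
have eps_def : eps = T%:R^-1 by rewrite -epsT invrK.
rewrite /Psi_mu -/C; subst eps.
have [C_gt0 | C_le0] := ltrP 0 C.
  have Psi_mu_le :=
    Psi_mu_unif_le M_mdp Pi_sub mu_ge0 C_gt0 occ_le_C T_gt0 pol_in mu_sum1 pol_opt.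
  have Psi_le := Psi_unif_le M_mdp Pi_sub mu_ge0 C_gt0 occ_le_C T_gt0 pol_in mu_sum1 pol_opt.
  split; [apply: le_trans Psi_mu_le _ | apply: le_trans Psi_le _]; rewrite lee_fin //.
  by rewrite (mulrC 6 C) -mulrA ler_wpM2l //; lra.
have occ0 pi : Pi pi -> forall x a, occ M pi h x a = 0.
  move=> pi_in x a; apply/eqP; rewrite eq_le (occ_ge0 M_mdp _ _ _ _ (Pi_sub _ pi_in)) andbT.
  exact: le_trans (occ_le_C _ pi_in x a) (mulr_le0_ge0 C_le0 (mu_ge0 _)).
by split; apply: ge_ereal_sup => _ [pi pi_in <-];
  rewrite (Eocc_occ0 _ _ _ (occ0 _ pi_in)) -[leLHS]/(0%:E) lee_fin !mulr_ge0.
Qed.
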